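(* Let $\phi_1,\phi_2:\mathbb R^n\to\mathbb R$ both satisfy the standing assumption, let $f_1,f_2:\mathbb R^n\to\overline{\mathbb R}$ be proper, lsc, convex, with $f_i$ a-smooth relative to $\phi_i$ ($i=1,2$), and let $a_1,a_2>0$. Assume that one of $f_1,f_2$ is bounded below and the other is coercive, or that one of them is super-coercive. Then $(a_1\star f_1)\,\square\,(a_2\star f_2)$ is a-smooth relative to the reference function $\phi:=(a_1\star\phi_1)\,\square\,(a_2\star\phi_2)$.
   Context: Standing assumption on a reference function $\psi:\mathbb R^n\to\mathbb R$: convex, finite-valued, differentiable and strictly convex (Legendre with full domain), super-coercive ($\psi(x)/\|x\|\to\infty$). Epi-scaling: $(a\star f)(x)=af(x/a)$. Infimal convolution: $(g\,\square\,h)(x)=\inf_y g(y)+h(x-y)$. Coercive: $f(x)\to\infty$ as $\|x\|\to\infty$. A proper lsc $h$ is a-weakly convex relative to $\psi$ if for every $(\bar x,\bar v)\in\operatorname{graph}\partial h$ (limiting subdifferential): $h(x)\ge h(\bar x)-\psi(x-\bar x+\nabla\psi^*(-\bar v))+\psi(\nabla\psi^*(-\bar v))$ for all $x$; $f$ is a-smooth relative to $\psi$ if $f$ is real-valued, continuously differentiable, and both $f$ and $-f$ are a-weakly convex relative to $\psi$. *)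

From HB Require Import structures.
From mathcomp Require Import all_boot all_order all_algebra.
From mathcomp Require Import all_classical all_reals.
From mathcomp Require Import ereal.
Set Implicit Arguments. Unset Strict Implicit. Unset Printing Implicit Defensive.
Import Order.TTheory GRing.Theory Num.Theory.
Local Open Scope classical_set_scope.
Local Open Scope ring_scope.

Section Defs.
Variables (R : realType) (n : nat).
Notation vec := 'rV[R]_n.

Definition dotp (x y : vec) : R := \sum_(i < n) x ord0 i * y ord0 i.
Definition enorm (x : vec) : R := Num.sqrt (dotp x x).

Definition has_gradient (g : vec -> R) (x gx : vec) : Prop :=
  forall eps : R, 0 < eps -> exists2 del : R, 0 < del & forall y : vec,
    enorm (y - x) < del ->
    `| g y - g x - dotp gx (y - x) | <= eps * enorm (y - x).

Definition differentiable_everywhere (g : vec -> R) : Prop :=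
  forall x, exists gx, has_gradient g x gx.

Definition vcontinuous (G : vec -> vec) : Prop :=
  forall x (eps : R), 0 < eps -> exists2 del : R, 0 < del & forall y,
    enorm (y - x) < del -> enorm (G y - G x) < eps.

Definition C1 (g : vec -> R) : Prop :=
  exists G : vec -> vec, (forall x, has_gradient g x (G x)) /\ vcontinuous G.

(* Convex conjugate (real-valued; finite under the standing assumption) *)
Definition conjugate (psi : vec -> R) (y : vec) : R :=
  fine (ereal_sup [set ((dotp x y - psi x)%:E) | x in setT]).

Definition standing_assumption (psi : vec -> R) : Prop :=
  [/\ (forall x y (t : R), 0 <= t <= 1 ->
         psi (t *: x + (1 - t) *: y) <= t * psi x + (1 - t) * psi y),
      differentiable_everywhere psi,
      (forall x y (t : R), x != y -> 0 < t < 1 ->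
         psi (t *: x + (1 - t) *: y) < t * psi x + (1 - t) * psi y)
    & (forall M : R, exists r : R, forall x, r <= enorm x -> M * enorm x <= psi x)].

Local Open Scope ereal_scope.

Definition proper_fun (h : vec -> \bar R) : Prop :=
  (forall x, h x != -oo) /\ (exists x, h x \is a fin_num).

Definition lsc (h : vec -> \bar R) : Prop :=
  forall x (t : R), t%:E < h x -> exists2 del : R, (0 < del)%R &
    forall y, (enorm (y - x) < del)%R -> t%:E < h y.

Definition convex_fun (h : vec -> \bar R) : Prop :=
  forall (x y : vec) (t : R), (0 < t < 1)%R ->
    h (t *: x + (1 - t) *: y)%R <= t%:E * h x + (1 - t)%:E * h y.

Definition bounded_below (h : vec -> \bar R) : Prop :=
  exists m : R, forall x, m%:E <= h x.

Definition coercive (h : vec -> \bar R) : Prop :=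
  forall M : R, exists r : R, forall x, (r <= enorm x)%R -> M%:E <= h x.

Definition supercoercive (h : vec -> \bar R) : Prop :=
  forall M : R, exists r : R, forall x, (r <= enorm x)%R -> (M * enorm x)%:E <= h x.

Definition frechet_subgrad (h : vec -> \bar R) (x v : vec) : Prop :=
  h x \is a fin_num /\
  forall eps : R, (0 < eps)%R -> exists2 del : R, (0 < del)%R & forall y,
    (enorm (y - x) < del)%R ->
    h x + (dotp v (y - x)%R - eps * enorm (y - x))%:E <= h y.

Definition limiting_subgrad (h : vec -> \bar R) (x v : vec) : Prop :=
  h x \is a fin_num /\
  exists (xs vs : nat -> vec),
    (forall k, frechet_subgrad h (xs k) (vs k)) /\
    (forall eps : R, (0 < eps)%R -> exists N : nat, forall k, (N <= k)%N ->
       [/\ (enorm (xs k - x) < eps)%R, (enorm (vs k - v) < eps)%R,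
           h (xs k) \is a fin_num & (`| fine (h (xs k)) - fine (h x) | < eps)%R]).

Definition weakly_convex_rel (psi : vec -> R) (h : vec -> \bar R) : Prop :=
  proper_fun h /\ lsc h /\
  forall xb vb, limiting_subgrad h xb vb ->
    forall w, has_gradient (conjugate psi) (- vb) w ->
      forall x, h xb + (- psi (x - xb + w)%R + psi w)%:E <= h x.

Definition smooth_rel (psi : vec -> R) (f : vec -> \bar R) : Prop :=
  [/\ (forall x, f x \is a fin_num), C1 (fun x => fine (f x)),
      weakly_convex_rel psi f & weakly_convex_rel psi (fun x => - f x)].

Definition escale (a : R) (f : vec -> \bar R) (x : vec) : \bar R :=
  a%:E * f (a^-1 *: x)%R.

Definition infconv (g h : vec -> \bar R) (x : vec) : \bar R :=
  ereal_inf [set g y + h (x - y)%R | y in setT].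

Definition ref_infconv (a1 a2 : R) (phi1 phi2 : vec -> R) (x : vec) : R :=
  fine (infconv (escale a1 (fun z => (phi1 z)%:E))
                (escale a2 (fun z => (phi2 z)%:E)) x).

End Defs.

(* With finite data, the epi-scaled functions p_i = a_i * f_i (./a_i) and
   q_i = a_i * phi_i (./a_i) are convex and C^1, and the growth hypotheses make the infimal
   convolutions F = p_1 [] p_2 and Phi = q_1 [] q_2 exact: F x = p_1 u + p_2 (x - u) at a
   minimizer u, where grad F x = grad p_1 u = grad p_2 (x - u); likewise for Phi.  Hence F and
   Phi are convex and C^1, and weak convexity of F relative to Phi is plain convexity.  By
   Danskin's theorem, weak convexity of -f relative to a Legendre phi is the descent inequality
   f y <= f x + phi (y - x + z) - phi z whenever grad phi z = grad f x.  This inequality passes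
   to infimal convolutions by adding it for the two components at their minimizers. *)

From HB Require Import structures.
From mathcomp Require Import all_boot all_order all_algebra.
From mathcomp Require Import all_classical all_reals.
From mathcomp Require Import ereal.
From mathcomp Require Import lra ring.
From mathcomp Require Import topology normedtype derive matrix_normedtype.
Set Implicit Arguments. Unset Strict Implicit. Unset Printing Implicit Defensive.
Import Order.TTheory GRing.Theory Num.Theory Num.Def.
Import numFieldTopology.Exports numFieldNormedType.Exports.
Local Open Scope classical_set_scope.
Local Open Scope ring_scope.

Section Euclid.
Variables (R : realType) (n : nat).
Notation vec := 'rV[R]_n.
Implicit Types (x y z : vec).

Lemma dotpC x y : dotp x y = dotp y x.
Proof. by apply: eq_bigr => i _; rewrite mulrC. Qed.

Lemma dotpDl x y z : dotp (x + y) z = dotp x z + dotp y z.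
Proof. by rewrite /dotp -big_split; apply: eq_bigr => i _; rewrite mxE mulrDl. Qed.

Lemma dotpDr x y z : dotp z (x + y) = dotp z x + dotp z y.
Proof. by rewrite dotpC dotpDl !(dotpC z). Qed.

Lemma dotpZl a x y : dotp (a *: x) y = a * dotp x y.
Proof. by rewrite /dotp mulr_sumr; apply: eq_bigr => i _; rewrite mxE mulrA. Qed.

Lemma dotpZr a x y : dotp y (a *: x) = a * dotp y x.
Proof. by rewrite dotpC dotpZl dotpC. Qed.

Lemma dotpNl x y : dotp (- x) y = - dotp x y.
Proof. by rewrite -scaleN1r dotpZl mulN1r. Qed.

Lemma dotpNr x y : dotp y (- x) = - dotp y x.
Proof. by rewrite -scaleN1r dotpZr mulN1r. Qed.

Lemma dotpBl x y z : dotp (x - y) z = dotp x z - dotp y z.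
Proof. by rewrite dotpDl dotpNl. Qed.

Lemma dotpBr x y z : dotp z (x - y) = dotp z x - dotp z y.
Proof. by rewrite dotpDr dotpNr. Qed.

Lemma dotp0l x : dotp 0 x = 0.
Proof. by rewrite -(scale0r 0) dotpZl mul0r. Qed.

Lemma dotpp_ge0 x : 0 <= dotp x x.
Proof. by apply: sumr_ge0 => i _; rewrite -expr2 sqr_ge0. Qed.

Lemma dotpp_eq0 x : dotp x x = 0 -> x = 0.
Proof.
move=> /eqP; rewrite psumr_eq0 => [/allP H|i _]; last by rewrite -expr2 sqr_ge0.
apply/rowP => i; rewrite mxE; have := H i; rewrite mem_index_enum => /(_ isT).
by rewrite mulf_eq0 orbb => /eqP.
Qed.

Lemma enorm_ge0 x : 0 <= enorm x.
Proof. exact: sqrtr_ge0. Qed.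

Lemma sqr_enorm x : enorm x ^+ 2 = dotp x x.
Proof. by rewrite sqr_sqrtr // dotpp_ge0. Qed.

Lemma enorm_eq0 x : enorm x = 0 -> x = 0.
Proof. by move=> h; apply: dotpp_eq0; rewrite -sqr_enorm h expr0n. Qed.

Lemma enorm_gt0 x : x != 0 -> 0 < enorm x.
Proof.
move=> x0; rewrite lt_neqAle enorm_ge0 andbT eq_sym.
by apply: contra x0 => /eqP/enorm_eq0 ->.
Qed.

Lemma enorm0 : enorm (0 : vec) = 0.
Proof. by rewrite /enorm dotp0l sqrtr0. Qed.

Lemma enormZ a x : enorm (a *: x) = `|a| * enorm x.
Proof.
by rewrite /enorm dotpZl dotpZr mulrA -expr2 sqrtrM ?sqr_ge0 // sqrtr_sqr.
Qed.

Lemma enormN x : enorm (- x) = enorm x.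
Proof. by rewrite -scaleN1r enormZ normrN normr1 mul1r. Qed.

Lemma enormB x y : enorm (x - y) = enorm (y - x).
Proof. by rewrite -enormN opprB. Qed.

Lemma cauchy_schwarz x y : `|dotp x y| <= enorm x * enorm y.
Proof.
have key : dotp x y ^+ 2 <= dotp x x * dotp y y.
  have quad t : 0 <= t ^+ 2 * dotp x x + 2 * t * dotp x y + dotp y y.
    have := dotpp_ge0 (t *: x + y).
    rewrite !dotpDl !dotpDr !dotpZl !dotpZr (dotpC y x); lra.
  have [/dotpp_eq0 ->|xx0] := eqVneq (dotp x x) 0.
    by rewrite !dotp0l expr0n mul0r.
  have xx_gt0 : 0 < dotp x x by rewrite lt_neqAle eq_sym xx0 dotpp_ge0.
  have := quad (- dotp x y / dotp x x).
  set a := dotp x x; set b := dotp x y; set c := dotp y y.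
  have -> : (- b / a) ^+ 2 * a + 2 * (- b / a) * b + c = c - b ^+ 2 / a.
    by field; rewrite /a xx0.
  by rewrite subr_ge0 ler_pdivrMr // mulrC.
rewrite -(ler_pXn2r (_ : 0 < 2)%N) ?nnegrE ?mulr_ge0 ?enorm_ge0 //.
by rewrite real_normK ?num_real // exprMn !sqr_enorm.
Qed.

Lemma enormD x y : enorm (x + y) <= enorm x + enorm y.
Proof.
rewrite -(ler_pXn2r (_ : 0 < 2)%N) ?nnegrE ?addr_ge0 ?enorm_ge0 //.
rewrite sqr_enorm !dotpDl !dotpDr (dotpC y x) sqrrD !sqr_enorm.
have := cauchy_schwarz x y; have := ler_norm (dotp x y); lra.
Qed.

Lemma enormB_le x y : enorm (x - y) <= enorm x + enorm y.
Proof. by apply: le_trans (enormD _ _) _; rewrite enormN. Qed.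

Lemma lerB_enorm x y : enorm y - enorm x <= enorm (x - y).
Proof. have := enormD (y - x) x; rewrite subrK enormB; lra. Qed.

Lemma ler_enorm_dist x y : `|enorm x - enorm y| <= enorm (x - y).
Proof.
have := lerB_enorm x y; have := lerB_enorm y x; rewrite ler_norml (enormB y x).
by move=> h1 h2; apply/andP; split; lra.
Qed.

Lemma enorm_coord x i : `|x ord0 i| <= enorm x.
Proof.
rewrite -sqrtr_sqr ler_sqrt ?dotpp_ge0 // /dotp (bigD1 i) //= -expr2 lerDl.
by apply: sumr_ge0 => j _; rewrite -expr2 sqr_ge0.
Qed.

End Euclid.

Section Topology.
Variables (R : realType) (n : nat).
Notation vec := 'rV[R]_n.
Implicit Types (x y z : vec) (g : vec -> R).

Definition continuousR g := forall x (eps : R), 0 < eps ->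
  exists2 del : R, 0 < del & forall y, enorm (y - x) < del -> `|g y - g x| < eps.

Definition coerciveR g := forall M : R, exists r : R, forall x, r <= enorm x -> M <= g x.

Lemma normr_le_enorm (v : vec) : `|v| <= enorm v.
Proof.
rewrite /normr /= mx_normrE; apply: bigmax_le; first exact: enorm_ge0.
by case=> i j _ /=; rewrite (ord1 i); exact: enorm_coord.
Qed.

Lemma enorm_le_normr (v : vec) : enorm v <= n%:R * `|v|.
Proof.
rewrite -(ler_pXn2r (_ : 0 < 2)%N) ?nnegrE ?mulr_ge0 ?enorm_ge0 //.
rewrite sqr_enorm /dotp; apply: (@le_trans _ _ (\sum_(i < n) `|v| ^+ 2)).
  apply: ler_sum => i _; rewrite -expr2 -real_normK ?num_real //.
  rewrite lerXn2r ?nnegrE ?normr_ge0 // [X in _ <= X]/normr /= mx_normrE.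
  exact: (le_bigmax _ (fun ij => `|v ij.1 ij.2|) (ord0, i)).
rewrite sumr_const card_ord exprMn -[X in X <= _]mulr_natl.
apply: ler_wpM2r; first exact: sqr_ge0.
by rewrite -natrX ler_nat; case: n => // k; rewrite expnS leq_pmulr.
Qed.

Lemma continuousR_continuous g : continuousR g -> continuous g.
Proof.
move=> hg x A /= /nbhs_ballP [e e0 heA].
have [d d0 hd] := hg x e e0.
apply/nbhs_ballP; exists (d / (n%:R + 1)) => /=; first by rewrite divr_gt0 // ltr_wpDl.
move=> y; rewrite -ball_normE /= distrC ltr_pdivlMr ?ltr_wpDl // => hxy.
apply: heA; rewrite -ball_normE /= distrC; apply: hd.
apply: le_lt_trans (enorm_le_normr _) (le_lt_trans _ hxy).
by rewrite mulrC ler_wpM2l ?normr_ge0 // lerDl.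
Qed.

Lemma continuousR_enorm_sub c : continuousR (fun x => enorm (x - c)).
Proof.
move=> x e e0; exists e => // y hy; apply: le_lt_trans (ler_enorm_dist _ _) _.
by rewrite opprB addrA subrK.
Qed.

Lemma closed_enorm_sub (c : vec) (D : set R) : closed D -> closed [set x | D (enorm (x - c))].
Proof.
move=> cD; apply: (preimage_closed (f := fun x : vec => enorm (x - c))) => // x _.
exact/continuousR_continuous/continuousR_enorm_sub.
Qed.

Lemma continuousR_min_bounded (K : set vec) g : K !=set0 -> closed K ->
  (exists M, forall x, K x -> enorm x <= M) -> continuousR g ->
  exists2 c, K c & forall t, K t -> g c <= g t.
Proof.
move=> K0 Kc [M hM] hg.
have cK : compact K.
  apply: bounded_closed_compact => //; exists M; split; first exact: num_real.
  move=> N hN x Kx; apply/ltW/(le_lt_trans _ hN).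
  exact: le_trans (normr_le_enorm x) (hM x Kx).
have [c cK' hc] := compact_EVT_min K0 cK (continuous_subspaceT (continuousR_continuous hg)).
by exists c => [|t Kt]; [rewrite inE in cK' | apply: hc; rewrite inE].
Qed.

Lemma coerciveR_attains_min g : continuousR g -> coerciveR g -> exists c, forall y, g c <= g y.
Proof.
move=> hg /(_ (g 0)) [r hr].
have [||c Kc hc] := @continuousR_min_bounded [set x | enorm (x - 0) <= `|r|] g _
  (closed_enorm_sub (c := 0) (@closed_le _ `|r|)) _ hg.
- by exists 0; rewrite /= subr0 enorm0.
- by exists `|r| => x; rewrite /= subr0.
exists c => y; have [hy|hy] := leP (enorm (y - 0)) `|r|; first exact: hc.
apply: le_trans (hc 0 _) (hr y _); first by rewrite /= subr0 enorm0.
by rewrite subr0 in hy; apply: le_trans (ltW hy); exact: ler_norm.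
Qed.

End Topology.

Section Gradient.
Variables (R : realType) (n : nat).
Notation vec := 'rV[R]_n.
Implicit Types (x y z : vec) (g : vec -> R).

Definition convexR g := forall x y (t : R), 0 <= t <= 1 ->
  g (t *: x + (1 - t) *: y) <= t * g x + (1 - t) * g y.

Definition strictly_convexR g := forall x y (t : R), x != y -> 0 < t < 1 ->
  g (t *: x + (1 - t) *: y) < t * g x + (1 - t) * g y.

Definition subgradient_map g (G : vec -> vec) := forall x y, g x + dotp (G x) (y - x) <= g y.

Lemma has_gradient_lipschitz g x G : has_gradient g x G ->
  exists2 d : R, 0 < d & forall y, enorm (y - x) < d ->
    `|g y - g x| <= (enorm G + 1) * enorm (y - x).
Proof.
move=> hg; have [d d0 hd] := hg 1 ltr01; exists d => // y /hd.
have := cauchy_schwarz G (y - x); have := ler_normD (g y - g x - dotp G (y - x)) (dotp G (y - x)).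
by rewrite subrK mulrDl mul1r; lra.
Qed.

Lemma differentiable_continuousR g : differentiable_everywhere g -> continuousR g.
Proof.
move=> dg x e e0; have [G /has_gradient_lipschitz [d d0 hd]] := dg x.
have K0 : 0 < enorm G + 1 by rewrite ltr_wpDl ?enorm_ge0.
exists (Num.min d (e / (enorm G + 1))); first by rewrite lt_min d0 divr_gt0.
move=> y; rewrite lt_min => /andP[/hd hy1 hy2].
by apply: le_lt_trans hy1 _; rewrite mulrC -ltr_pdivlMr.
Qed.

Lemma has_gradient_lower_estimate g x G (v : vec) : has_gradient g x G ->
  (forall eps : R, 0 < eps -> exists2 del : R, 0 < del & forall y,
     enorm (y - x) < del -> g x + dotp v (y - x) - eps * enorm (y - x) <= g y) ->
  v = G.
Proof.
move=> hg hl; apply/eqP; rewrite -subr_eq0; apply/negPn/negP => /enorm_gt0 uN.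
set u := v - G in uN; set e := enorm u / 4.
have e0 : 0 < e by rewrite divr_gt0.
have [d1 d10 h1] := hg e e0; have [d2 d20 h2] := hl e e0.
set m := Num.min d1 d2; have m0 : 0 < m by rewrite lt_min d10 d20.
set t := m / (2 * enorm u); have t0 : 0 < t by rewrite divr_gt0 // mulr_gt0.
have yx : x + t *: u - x = t *: u by rewrite addrAC subrr add0r.
have hy : enorm (x + t *: u - x) < m.
  rewrite yx enormZ gtr0_norm // /t.
  have -> : m / (2 * enorm u) * enorm u = m / 2 by field; exact: lt0r_neq0.
  by rewrite ltr_pdivrMr // ltr_pMr // ltr1n.
have u4 : enorm u = 4 * e by rewrite /e mulrC divfK // pnatr_eq0.
move: hy; rewrite lt_min => /andP[/h1 + /h2]; rewrite yx !dotpZr !enormZ (gtr0_norm t0) u4.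
rewrite ler_norml => /andP[_ up] low.
have : t * (dotp v u - dotp G u) <= 2 * (e * (t * (4 * e))) by rewrite mulrBr; lra.
rewrite -dotpBl -sqr_enorm u4; have : 0 < t * (e * e) by rewrite mulr_gt0 // mulr_gt0.
nra.
Qed.

Lemma has_gradient_unique g x G1 G2 : has_gradient g x G1 -> has_gradient g x G2 -> G1 = G2.
Proof.
move=> h1 h2; apply: has_gradient_lower_estimate h2 _ => e /h1 [d d0 hd].
by exists d => // y /hd; rewrite ler_norml => /andP[+ _]; lra.
Qed.

Lemma subgradient_eq_gradient g x G (v : vec) : has_gradient g x G ->
  (forall y, g x + dotp v (y - x) <= g y) -> v = G.
Proof.
move=> hg hv; apply: has_gradient_lower_estimate hg _ => e e0; exists 1 => // y _.
have : 0 <= e * enorm (y - x) by rewrite mulr_ge0 ?enorm_ge0 // ltW.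
by have := hv y; lra.
Qed.

Lemma convex_subgradient g x G : convexR g -> has_gradient g x G ->
  forall y, g x + dotp G (y - x) <= g y.
Proof.
move=> hc hg y; rewrite leNgt; apply/negP => hlt.
set d := y - x; set gap := g x + dotp G d - g y.
have gap0 : 0 < gap by rewrite /gap subr_gt0.
set N := enorm d; have N0 : 0 <= N := enorm_ge0 _.
set e := gap / (N + 1); have e0 : 0 < e by rewrite divr_gt0 // ltr_wpDl.
have [del del0 hd] := hg e e0.
set t := del / (2 * (N + del + 1)).
have den0 : 0 < 2 * (N + del + 1) by rewrite mulr_gt0 // ltr_wpDl // addr_ge0 // ltW.
have t0 : 0 < t by rewrite divr_gt0.
have t1 : t < 1 by rewrite /t ltr_pdivrMr // mul1r; lra.
set z := t *: y + (1 - t) *: x.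
have zx : z - x = t *: d by apply/rowP => i; rewrite /z /d !mxE; ring.
have hz : enorm (z - x) < del.
  rewrite zx enormZ gtr0_norm // /t mulrC mulrA ltr_pdivrMr //.
  have : N * del < del * (2 * (N + del + 1)) by nra.
  by rewrite mulrC.
have := hd z hz; rewrite zx dotpZr enormZ (gtr0_norm t0) -/N ler_norml => /andP[h2 _].
have := hc y x t; rewrite ltW // (ltW t1) => /(_ isT); rewrite -/z => h3.
have : t * (dotp G d - e * N) <= t * (g y - g x) by lra.
rewrite ler_pM2l // => h4.
have : gap <= e * N by rewrite /gap; lra.
rewrite /e mulrC mulrA ler_pdivlMr ?ltr_wpDl //.
have : 0 < gap * (N + 1) - N * gap by nra.
lra.
Qed.

Lemma has_gradientD g1 g2 x G1 G2 : has_gradient g1 x G1 -> has_gradient g2 x G2 ->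
  has_gradient (fun y => g1 y + g2 y) x (G1 + G2).
Proof.
move=> h1 h2 e e0.
have [d1 d10 hd1] := h1 (e / 2) (divr_gt0 e0 (ltr0n _ 2)).
have [d2 d20 hd2] := h2 (e / 2) (divr_gt0 e0 (ltr0n _ 2)).
exists (Num.min d1 d2); first by rewrite lt_min d10 d20.
move=> y; rewrite lt_min => /andP[/hd1 hy1 /hd2 hy2]; rewrite dotpDl.
set a := g1 y - g1 x - dotp G1 (y - x); set b := g2 y - g2 x - dotp G2 (y - x).
have -> : g1 y + g2 y - (g1 x + g2 x) - (dotp G1 (y - x) + dotp G2 (y - x)) = a + b.
  by rewrite /a /b; ring.
by apply: le_trans (ler_normD _ _) _; lra.
Qed.

Lemma has_gradientN g x G : has_gradient g x G -> has_gradient (fun y => - g y) x (- G).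
Proof.
move=> h e /h [d d0 hd]; exists d => // y hy; rewrite dotpNl.
have -> : - g y - - g x - - dotp G (y - x) = - (g y - g x - dotp G (y - x)) by ring.
by rewrite normrN; exact: hd.
Qed.

Lemma has_gradient_subr g c x G : has_gradient g (c - x) G ->
  has_gradient (fun y => g (c - y)) x (- G).
Proof.
move=> h e /h [d d0 hd]; exists d => // y hy.
have e1 : c - y - (c - x) = - (y - x) by apply/rowP => i; rewrite !mxE; ring.
by have := hd (c - y); rewrite e1 enormN dotpNr dotpNl opprK => /(_ hy).
Qed.

Lemma has_gradient_affine (c : R) v x : has_gradient (fun y => c + dotp v y) x v.
Proof.
move=> e e0; exists 1 => // y _.
have -> : c + dotp v y - (c + dotp v x) - dotp v (y - x) = 0 by rewrite dotpBr; ring.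
by rewrite normr0 mulr_ge0 ?enorm_ge0 // ltW.
Qed.

Lemma subgradient_map_continuous g (G : vec -> vec) :
  (forall x, has_gradient g x (G x)) -> subgradient_map g G -> vcontinuous G.
Proof.
move=> hg hs x e e0.
have e4 : 0 < e / 4 by rewrite divr_gt0.
have [d d0 hd] := hg x _ e4.
exists (d / 2) => [|y hy]; first by rewrite divr_gt0.
set D := G y - G x.
have [->|/enorm_gt0 nD] := eqVneq D 0; first by rewrite enorm0.
set t := d / 4; have t0 : 0 < t by rewrite divr_gt0.
set u := (enorm D)^-1 *: D.
have Du : dotp D u = enorm D.
  by rewrite dotpZr -sqr_enorm expr2 mulrA mulVf ?mul1r ?gt_eqF.
have yx : y + t *: u - x = (y - x) + t *: u by apply/rowP => i; rewrite !mxE; ring.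
have eyx : enorm (y + t *: u - x) <= d / 2 + d / 4.
  rewrite yx; apply: le_trans (enormD _ _) _.
  rewrite enormZ gtr0_norm // enormZ gtr0_norm ?invr_gt0 // mulVf ?gt_eqF // mulr1.
  by rewrite /t; lra.
have eyx' : enorm (y + t *: u - x) < d by apply: le_lt_trans eyx _; lra.
have := hd _ eyx'; rewrite ler_norml [in dotp _ _]yx dotpDr dotpZr => /andP[_ h2].
have h1 := hs y (y + t *: u); rewrite addrAC subrr add0r dotpZr in h1.
have h3 := hs x y.
have h5 : t * enorm D <= e / 4 * (d / 2 + d / 4).
  by rewrite -Du /D dotpBl; have := ler_wpM2l (ltW e4) eyx; lra.
have : t * enorm D <= t * (3 * e / 4) by apply: le_trans h5 _; rewrite /t; lra.
by rewrite ler_pM2l //; lra.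
Qed.

End Gradient.

Section Growth.
Variables (R : realType) (n : nat).
Notation vec := 'rV[R]_n.
Implicit Types (x y z : vec) (g h : vec -> R).

Definition supercoerciveR g :=
  forall M : R, exists r : R, forall x, r <= enorm x -> M * enorm x <= g x.

Definition bounded_belowR g := exists m : R, forall x, m <= g x.

Definition superlinear g := forall M : R, exists c : R, forall x, M * enorm x - c <= g x.

Lemma coerciveR_subr g c : coerciveR g -> coerciveR (fun y => g (c - y)).
Proof.
move=> hg M; have [r hr] := hg M; exists (`|r| + enorm c) => y hy; apply: hr.
by have := lerB_enorm c y; have := ler_norm r; lra.
Qed.

Lemma coerciveR_infconv_sym g h x :
  coerciveR (fun y => h y + g (x - y)) -> coerciveR (fun y => g y + h (x - y)).
Proof.
move=> /(coerciveR_subr x) hc M; have [r hr] := hc M.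
by exists r => y /hr; rewrite subKr addrC.
Qed.

Lemma coerciveR_add_bounded g h : bounded_belowR g -> coerciveR h -> coerciveR (fun y => g y + h y).
Proof.
move=> [m hm] hh M; have [r hr] := hh (M - m).
by exists r => y /hr; have := hm y; lra.
Qed.

Lemma coerciveR_supercoercive_add g h (c K : R) :
  supercoerciveR g -> (forall y, c - K * enorm y <= h y) -> coerciveR (fun y => g y + h y).
Proof.
move=> hg hh M; have [r hr] := hg (K + 1).
exists (Num.max r `|M - c|) => y; rewrite ge_max => /andP[/hr h1 h2].
by have := hh y; have := ler_norm (M - c); lra.
Qed.

Lemma convex_minorant_subr g x : convexR g -> differentiable_everywhere g ->
  exists c K : R, forall y, c - K * enorm y <= g (x - y).
Proof.
move=> cg dg; have [G hG] := dg 0.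
exists (g 0 - enorm G * enorm x), (enorm G) => y.
have := convex_subgradient cg hG (x - y); rewrite subr0.
have := cauchy_schwarz G (x - y); rewrite ler_norml => /andP[h1 _].
have : enorm G * enorm (x - y) <= enorm G * (enorm x + enorm y).
  by rewrite ler_wpM2l ?enorm_ge0 ?enormB_le.
lra.
Qed.

Lemma coerciveR_infconv g h x : convexR g -> convexR h ->
  differentiable_everywhere g -> differentiable_everywhere h ->
  (bounded_belowR g /\ coerciveR h) \/ (bounded_belowR h /\ coerciveR g) \/
  supercoerciveR g \/ supercoerciveR h ->
  coerciveR (fun y => g y + h (x - y)).
Proof.
move=> cg ch dg dh [[b c]|[[b c]|[s|s]]].
- exact: coerciveR_add_bounded b (coerciveR_subr x c).
- exact/coerciveR_infconv_sym/(coerciveR_add_bounded b (coerciveR_subr x c)).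
- have [c [K hK]] := convex_minorant_subr x ch dh.
  exact: coerciveR_supercoercive_add s hK.
- apply: coerciveR_infconv_sym; have [c [K hK]] := convex_minorant_subr x cg dg.
  exact: coerciveR_supercoercive_add s hK.
Qed.

Lemma supercoercive_superlinear g : convexR g -> differentiable_everywhere g ->
  supercoerciveR g -> superlinear g.
Proof.
move=> cg dg sg M; have [G0 hG0] := dg 0; have [r hr] := sg M.
exists (`|M| * `|r| + enorm G0 * `|r| + `|g 0|) => x.
have x0 := enorm_ge0 x; have G00 := enorm_ge0 G0; have r0 := ler_norm r.
have hg0 : - `|g 0| <= g 0 by rewrite lerNl -normrN ler_norm.
have hM : M * enorm x <= `|M| * enorm x by rewrite ler_wpM2r ?ler_norm.
have Mr : 0 <= `|M| * `|r| by rewrite mulr_ge0.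
have Gr : 0 <= enorm G0 * `|r| by rewrite mulr_ge0.
have [/hr|hx] := leP r (enorm x); first by have := normr_ge0 (g 0); lra.
have := convex_subgradient cg hG0 x; rewrite subr0.
have := cauchy_schwarz G0 x; rewrite ler_norml => /andP[h1 _].
have : `|M| * enorm x <= `|M| * `|r| by rewrite ler_wpM2l // ltW // (lt_le_trans hx).
have : enorm G0 * enorm x <= enorm G0 * `|r|.
  by rewrite ler_wpM2l ?enorm_ge0 // ltW // (lt_le_trans hx).
lra.
Qed.

Lemma superlinear_conjugate_bounded g : superlinear g ->
  forall s, exists C : R, forall x, dotp x s - g x <= C.
Proof.
move=> sg s; have [c hc] := sg (enorm s + 1); exists c => x.
have := hc x; have := cauchy_schwarz x s; rewrite ler_norml => /andP[_ h2].
by rewrite (mulrC (enorm x)) in h2; have := enorm_ge0 x; nra.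
Qed.

End Growth.

Section EpiScaling.
Variables (R : realType) (n : nat).
Notation vec := 'rV[R]_n.
Implicit Types (x y z : vec) (g : vec -> R).

Definition escaleR (a : R) g y := a * g (a^-1 *: y).

Lemma escaleRK (a : R) g : a != 0 -> escaleR a^-1 (escaleR a g) = g.
Proof.
move=> a0; apply: funext => y.
by rewrite /escaleR invrK scalerA mulVf // scale1r mulrA mulVf // mul1r.
Qed.

Lemma has_gradient_escaleR a g x G : 0 < a ->
  has_gradient g (a^-1 *: x) G -> has_gradient (escaleR a g) x G.
Proof.
move=> a0 h e /h [d d0 hd]; exists (a * d); first by rewrite mulr_gt0.
move=> y hy.
have e1 : a^-1 *: y - a^-1 *: x = a^-1 *: (y - x) by rewrite scalerBr.
have ai0 : 0 < a^-1 by rewrite invr_gt0.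
have /hd : enorm (a^-1 *: y - a^-1 *: x) < d.
  by rewrite e1 enormZ (gtr0_norm ai0) mulrC ltr_pdivrMr // mulrC.
rewrite e1 dotpZr enormZ (gtr0_norm ai0) /escaleR.
have -> : a * g (a^-1 *: y) - a * g (a^-1 *: x) - dotp G (y - x) =
  a * (g (a^-1 *: y) - g (a^-1 *: x) - a^-1 * dotp G (y - x)) by field; rewrite gt_eqF.
have -> : e * enorm (y - x) = a * (e * (a^-1 * enorm (y - x))) by field; rewrite gt_eqF.
by rewrite normrM (gtr0_norm a0) ler_pM2l.
Qed.

Lemma has_gradient_of_escaleR a g x G : 0 < a ->
  has_gradient (escaleR a g) x G -> has_gradient g (a^-1 *: x) G.
Proof.
move=> a0 hg; rewrite -(escaleRK g (lt0r_neq0 a0)).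
by apply: has_gradient_escaleR; rewrite ?invr_gt0 // invrK scalerA mulfV ?gt_eqF // scale1r.
Qed.

Lemma differentiable_escaleR a g : 0 < a ->
  differentiable_everywhere g -> differentiable_everywhere (escaleR a g).
Proof. by move=> a0 dg x; have [G hG] := dg (a^-1 *: x); exists G; exact: has_gradient_escaleR. Qed.

Lemma convexR_escaleR a g : 0 < a -> convexR g -> convexR (escaleR a g).
Proof.
move=> a0 hc x y t ht; rewrite /escaleR scalerDr !scalerA (mulrC a^-1) (mulrC a^-1) -!scalerA.
by have := hc (a^-1 *: x) (a^-1 *: y) t ht; nra.
Qed.

Lemma enorm_escale_ge a (r : R) x : 0 < a -> a * `|r| <= enorm x -> r <= enorm (a^-1 *: x).
Proof.
move=> a0 hx; rewrite enormZ gtr0_norm ?invr_gt0 //; apply: le_trans (ler_norm r) _.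
by rewrite ler_pdivlMl // mulrC.
Qed.

Lemma supercoerciveR_escaleR a g : 0 < a -> supercoerciveR g -> supercoerciveR (escaleR a g).
Proof.
move=> a0 hs M; have [r hr] := hs M; exists (a * `|r|) => x /(enorm_escale_ge a0) /hr.
rewrite enormZ gtr0_norm ?invr_gt0 // => /(ler_wpM2l (ltW a0)).
suff -> : a * (M * (a^-1 * enorm x)) = M * enorm x by [].
by field; exact: lt0r_neq0.
Qed.

Lemma coerciveR_escaleR a g : 0 < a -> coerciveR g -> coerciveR (escaleR a g).
Proof.
move=> a0 hc M; have [r hr] := hc (M / a); exists (a * `|r|) => x /(enorm_escale_ge a0) /hr.
by rewrite ler_pdivrMr // mulrC.
Qed.

Lemma bounded_belowR_escaleR a g : 0 < a -> bounded_belowR g -> bounded_belowR (escaleR a g).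
Proof. by move=> a0 [m hm]; exists (a * m) => x; rewrite ler_pM2l. Qed.

End EpiScaling.

Section Conjugate.
Variables (R : realType) (n : nat).
Notation vec := 'rV[R]_n.
Implicit Types (x y z s : vec) (g : vec -> R).

Section BoundedConjugate.
Variables (g : vec -> R) (s : vec).
Hypothesis g_bounded : exists C : R, forall x, dotp x s - g x <= C.

Lemma EFin_conjugate : ereal_sup [set ((dotp x s - g x)%:E) | x in setT] = (conjugate g s)%:E.
Proof.
have [C hC] := g_bounded.
have le_C : (ereal_sup [set ((dotp x s - g x)%:E) | x in setT] <= C%:E)%E.
  by apply: ge_ereal_sup => _ [x _ <-]; rewrite lee_fin.
have ge_0 : ((dotp 0 s - g 0)%:E <= ereal_sup [set ((dotp x s - g x)%:E) | x in setT])%E.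
  by apply: ereal_sup_ubound; exists 0.
rewrite /conjugate fineK //; apply/fin_numPlt; apply/andP; split.
  by apply: lt_le_trans ge_0; exact: ltNyr.
by apply: le_lt_trans le_C _; exact: ltry.
Qed.

Lemma conjugate_ge x : dotp x s - g x <= conjugate g s.
Proof. by rewrite -lee_fin -EFin_conjugate; apply: ereal_sup_ubound; exists x. Qed.

Lemma conjugate_le (c : R) : (forall x, dotp x s - g x <= c) -> conjugate g s <= c.
Proof.
by move=> hc; rewrite -lee_fin -EFin_conjugate; apply: ge_ereal_sup => _ [x _ <-]; rewrite lee_fin.
Qed.

End BoundedConjugate.

Lemma conjugate_subgradient g z s : (forall x, g z + dotp s (x - z) <= g x) ->
  conjugate g s = dotp z s - g z.
Proof.
move=> hz; have hmax x : dotp x s - g x <= dotp z s - g z.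
  by have := hz x; rewrite dotpBr (dotpC s x) (dotpC s z); lra.
apply/eqP; rewrite eq_le conjugate_le //=; last by exists (dotp z s - g z).
by apply: conjugate_ge; exists (dotp z s - g z).
Qed.

(* Applied to a Bregman distance, this is what makes the conjugate differentiable. *)
Lemma strictly_convex_growth (D : vec -> R) z : convexR D -> strictly_convexR D ->
  continuousR D -> (forall x, 0 <= D x) -> D z = 0 ->
  forall e : R, 0 < e -> exists2 del : R, 0 < del &
    forall x, e < enorm (x - z) -> enorm (x - z) * del <= D x.
Proof.
move=> cD sD contD D0 Dz e e0.
set S := [set y | enorm (y - z) = e].
have onS x : e <= enorm (x - z) -> S ((e / enorm (x - z)) *: x + (1 - e / enorm (x - z)) *: z).
  move=> hx; have rho0 : 0 < enorm (x - z) by apply: lt_le_trans hx.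
  rewrite /S /=; have -> : (e / enorm (x - z)) *: x + (1 - e / enorm (x - z)) *: z - z =
    (e / enorm (x - z)) *: (x - z) by apply/rowP => i; rewrite !mxE; ring.
  by rewrite enormZ gtr0_norm ?divr_gt0 // divfK ?gt_eqF.
have [[x0 /ltW/onS S0]|none] := pselect (exists x, e < enorm (x - z)); last first.
  by exists 1 => // x hx; exfalso; apply: none; exists x.
have S_bounded : exists M, forall y, S y -> enorm y <= M.
  by exists (e + enorm z) => y Sy; have := enormD (y - z) z; rewrite subrK Sy.
have [c Sc cmin] := continuousR_min_bounded (ex_intro _ _ S0)
  (closed_enorm_sub (c := z) (@closed_eq _ e)) S_bounded contD.
have Dc0 : 0 < D c.
  rewrite lt_neqAle D0 andbT; apply/eqP => Dc.
  have cz : c != z.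
    by apply/eqP => czE; move: Sc; rewrite /S /= czE subrr enorm0 => /esym/eqP; rewrite gt_eqF.
  have half : 0 < (1 / 2 : R) < 1 by apply/andP; split; lra.
  have := sD c z _ cz half; rewrite -Dc Dz.
  by have := D0 ((1 / 2) *: c + (1 - 1 / 2) *: z); lra.
exists (D c / e) => [|x hx]; first by rewrite divr_gt0.
have rho0 : 0 < enorm (x - z) by apply: lt_trans hx.
set t := e / enorm (x - z).
have t0 : 0 < t by rewrite divr_gt0.
have t1 : t < 1 by rewrite ltr_pdivrMr // mul1r.
have := cmin _ (onS x (ltW hx)); rewrite -/t => h1.
have := cD x z t; rewrite ltW //= ltW // => /(_ isT); rewrite Dz mulr0 addr0 => h2.
have : D c <= t * D x by apply: le_trans h2.
rewrite /t mulrAC ler_pdivlMr // => h3.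
by rewrite mulrA ler_pdivrMr //; lra.
Qed.

Lemma conjugate_gradient phi z s : standing_assumption phi -> has_gradient phi z s ->
  has_gradient (conjugate phi) s z.
Proof.
move=> [cphi dphi sphi supphi] hz e e0.
have hb := superlinear_conjugate_bounded (supercoercive_superlinear cphi dphi supphi).
have sub_z := convex_subgradient cphi hz.
pose D x := phi x + ((dotp s z - phi z) + dotp (- s) x). (* Bregman distance from [z] *)
have D0 x : 0 <= D x by have := sub_z x; rewrite /D dotpNl dotpBr; lra.
have Dz : D z = 0 by rewrite /D dotpNl; ring.
have cD : convexR D.
  by move=> x y t ht; have := cphi x y t ht; rewrite /D !dotpDr !dotpZr; lra.
have sD : strictly_convexR D.
  by move=> x y t xy ht; have := sphi x y t xy ht; rewrite /D !dotpDr !dotpZr; lra.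
have contD : continuousR D.
  apply: differentiable_continuousR => x; have [G hG] := dphi x.
  by exists (G - s); exact: has_gradientD hG (has_gradient_affine _ _ _).
have [del del0 hdel] := strictly_convex_growth cD sD contD D0 Dz e0.
exists del => // s' hs'; set u := s' - s.
have low : dotp z s' - phi z <= conjugate phi s' by apply: conjugate_ge; exact: hb.
have up : conjugate phi s' <= conjugate phi s + dotp z u + e * enorm u.
  apply: conjugate_le; first exact: hb.
  move=> x; rewrite (conjugate_subgradient sub_z).
  have -> : dotp x s' - phi x = dotp z s - phi z + dotp z u - D x + dotp (x - z) u.
    by rewrite /D /u !dotpBl !dotpBr dotpNl (dotpC s x) (dotpC s z); ring.
  have := cauchy_schwarz (x - z) u; rewrite ler_norml => /andP[_ hcs].
  have u0 := enorm_ge0 u.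
  have [hx|/hdel hx] := leP (enorm (x - z)) e.
    by have := D0 x; have := ler_wpM2r u0 hx; lra.
  have : enorm (x - z) * enorm u <= enorm (x - z) * del by rewrite ler_wpM2l ?enorm_ge0 // ltW.
  have : 0 <= e * enorm u by rewrite mulr_ge0 // ltW.
  lra.
have cs := conjugate_subgradient sub_z; have zu : dotp z u = dotp z s' - dotp z s by rewrite dotpBr.
rewrite ler_norml; apply/andP; split; last by lra.
have : 0 <= e * enorm u by rewrite mulr_ge0 ?enorm_ge0 // ltW.
lra.
Qed.

Lemma conjugate_gradient_subgradient (Phi : vec -> R) (S : vec -> vec) :
  subgradient_map Phi S -> (forall s, exists C : R, forall x, dotp x s - Phi x <= C) ->
  forall y w, has_gradient (conjugate Phi) y w -> forall z, Phi w + dotp y (z - w) <= Phi z.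
Proof.
move=> hS hb y w hw z.
have cvx : convexR (conjugate Phi).
  move=> y1 y2 t /andP[t0 t1]; apply: conjugate_le; first exact: hb.
  move=> x; rewrite dotpDr !dotpZr.
  have := ler_wpM2l t0 (conjugate_ge (hb y1) x).
  have := ler_wpM2l (_ : 0 <= 1 - t) (conjugate_ge (hb y2) x); rewrite subr_ge0 => /(_ t1).
  lra.
have := convex_subgradient cvx hw (S w); rewrite (conjugate_subgradient (hS w)) dotpBr.
have := conjugate_ge (hb y) z.
rewrite dotpBr (dotpC w (S w)) (dotpC z y) (dotpC w y); lra.
Qed.

End Conjugate.

Section RelativeSmoothness.
Variables (R : realType) (n : nat).
Notation vec := 'rV[R]_n.
Implicit Types (x y z s : vec) (g : vec -> R).

(* The descent inequality expressing weak convexity of [-p] relative to [q], with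
   [z = grad (conjugate q) s] rewritten as [grad q z = s]. *)
Definition rel_upper (q p : vec -> R) := forall x z s,
  has_gradient p x s -> has_gradient q z s -> forall y, p y <= p x + q (y - x + z) - q z.

Lemma proper_EFin g : proper_fun (fun x => (g x)%:E).
Proof. by split => [x //|]; exists 0. Qed.

Lemma lsc_continuousR g : continuousR g -> lsc (fun x => (g x)%:E).
Proof.
move=> hg x t; rewrite lte_fin => ht; have [d d0 hd] := hg x (g x - t) ltac:(by rewrite subr_gt0).
by exists d => // y /hd; rewrite lte_fin ltr_norml; lra.
Qed.

Lemma limiting_subgrad_gradient g x G : has_gradient g x G ->
  limiting_subgrad (fun y => (g y)%:E) x G.
Proof.
move=> hg; split => //; exists (fun=> x), (fun=> G); split.
  move=> k; split => // e /hg [d d0 hd]; exists d => // y /hd.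
  by rewrite -EFinD lee_fin ler_norml => /andP[+ _]; lra.
by move=> e e0; exists 0%N => k _; rewrite !subrr enorm0 normr0.
Qed.

Lemma limiting_subgrad_C1 g (G : vec -> vec) : (forall x, has_gradient g x (G x)) ->
  vcontinuous G -> forall x v, limiting_subgrad (fun y => (g y)%:E) x v -> v = G x.
Proof.
move=> hg hc x v [_ [xs [vs [hf hcv]]]].
have vsE k : vs k = G (xs k).
  have [_ hfr] := hf k; apply: has_gradient_lower_estimate (hg (xs k)) _ => e /hfr [d d0 hd].
  by exists d => // y /hd; rewrite -EFinD lee_fin addrA.
suff small e : 0 < e -> enorm (v - G x) <= 2 * e.
  apply/eqP; rewrite -subr_eq0; apply/eqP/enorm_eq0/eqP; rewrite eq_le enorm_ge0 andbT.
  rewrite leNgt; apply/negP => hpos.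
  by have := small _ (divr_gt0 hpos (ltr0n _ 4)); lra.
move=> e0; have [d d0 hd] := hc x e e0.
have [N /(_ N (leqnn N)) [h1 h2 _ _]] := hcv (Num.min e d) ltac:(by rewrite lt_min e0 d0).
move: h1 h2; rewrite !lt_min => /andP[_ /hd h1] /andP[h2 _].
have -> : v - G x = (G (xs N) - G x) - (vs N - v).
  by rewrite vsE; apply/rowP => i; rewrite !mxE; ring.
by apply: le_trans (enormD _ _) _; rewrite enormN; lra.
Qed.

Lemma convex_weakly_convex_rel (Phi : vec -> R) (S : vec -> vec) g (G : vec -> vec) :
  subgradient_map Phi S -> superlinear Phi ->
  (forall x, has_gradient g x (G x)) -> subgradient_map g G ->
  weakly_convex_rel Phi (fun x => (g x)%:E).
Proof.
move=> hS sPhi hg sg; have Gc := subgradient_map_continuous hg sg.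
split; first exact: proper_EFin.
split; first by apply/lsc_continuousR/differentiable_continuousR => x; exists (G x).
move=> xb vb /(limiting_subgrad_C1 hg Gc) -> w hw x; rewrite -EFinD lee_fin.
have := conjugate_gradient_subgradient hS (superlinear_conjugate_bounded sPhi) hw (x - xb + w).
by rewrite addrK dotpNl; have := sg xb x; lra.
Qed.

Lemma rel_upper_weakly_convex_rel (Phi : vec -> R) (S : vec -> vec) g (G : vec -> vec) :
  (forall x, has_gradient Phi x (S x)) -> subgradient_map Phi S -> superlinear Phi ->
  (forall x, has_gradient g x (G x)) -> vcontinuous G -> rel_upper Phi g ->
  weakly_convex_rel Phi (fun x => - (g x)%:E)%E.
Proof.
move=> hPhi hS sPhi hg Gc up.
have -> : (fun x => - (g x)%:E)%E = (fun x => (- g x)%:E) by [].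
have hNg x : has_gradient (fun y => - g y) x (- G x) by exact: has_gradientN.
have NGc : vcontinuous (fun x => - G x).
  by move=> x e /(Gc x) [d d0 hd]; exists d => // y /hd; rewrite -opprD enormN.
split; first exact: proper_EFin.
split; first by apply/lsc_continuousR/differentiable_continuousR => x; exists (- G x).
move=> xb vb /(limiting_subgrad_C1 hNg NGc) -> w; rewrite opprK => hw x.
have sub_w := conjugate_gradient_subgradient hS (superlinear_conjugate_bounded sPhi) hw.
have Sw : G xb = S w := subgradient_eq_gradient (hPhi w) sub_w.
rewrite -EFinD lee_fin.
by have := up xb w (G xb) (hg xb) ltac:(rewrite Sw; exact: hPhi) x; lra.
Qed.

Lemma convex_rel_upper_smooth_rel (Phi : vec -> R) (S : vec -> vec) g (G : vec -> vec) :
  (forall x, has_gradient Phi x (S x)) -> subgradient_map Phi S -> superlinear Phi ->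
  (forall x, has_gradient g x (G x)) -> subgradient_map g G -> rel_upper Phi g ->
  smooth_rel Phi (fun x => (g x)%:E).
Proof.
move=> hPhi hS sPhi hg sg up; have Gc := subgradient_map_continuous hg sg.
split => //; first by exists G.
  exact: convex_weakly_convex_rel hS sPhi hg sg.
exact: rel_upper_weakly_convex_rel hPhi hS sPhi hg Gc up.
Qed.

Lemma smooth_rel_rel_upper phi f : standing_assumption phi -> smooth_rel phi f ->
  rel_upper phi (fun x => fine (f x)).
Proof.
move=> hphi [fin _ _ [_ [_ wc]]] x z s hx hz y.
have hl : limiting_subgrad (fun u => - f u)%E x (- s).
  have -> : (fun u => - f u)%E = (fun u => (- fine (f u))%:E).
    by apply: funext => u; rewrite EFinN fineK.
  exact/limiting_subgrad_gradient/has_gradientN.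
have := wc x (- s) hl z; rewrite opprK => /(_ (conjugate_gradient hphi hz) y).
by rewrite -(fineK (fin x)) -(fineK (fin y)) /= -EFinD lee_fin; lra.
Qed.

End RelativeSmoothness.

Section ExactInfconv.
Variables (R : realType) (n : nat).
Notation vec := 'rV[R]_n.
Implicit Types (x y z : vec).

Lemma coerciveR_infconv_attained (p1 p2 : vec -> R) :
  differentiable_everywhere p1 -> differentiable_everywhere p2 ->
  (forall x, coerciveR (fun y => p1 y + p2 (x - y))) ->
  forall x, exists u, forall y, p1 u + p2 (x - u) <= p1 y + p2 (x - y).
Proof.
move=> dp1 dp2 coer x; apply: coerciveR_attains_min (coer x).
apply: differentiable_continuousR => y.
have [G1 hG1] := dp1 y; have [G2 hG2] := dp2 (x - y).
by exists (G1 + - G2); exact: has_gradientD hG1 (has_gradient_subr hG2).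
Qed.

Variables (p1 p2 : vec -> R).
Hypothesis attained : forall x, exists u, forall y, p1 u + p2 (x - u) <= p1 y + p2 (x - y).

Definition infconv_argmin x := projT1 (choice attained) x.

Definition infconv_min x := p1 (infconv_argmin x) + p2 (x - infconv_argmin x).

Lemma infconv_min_le x y : infconv_min x <= p1 y + p2 (x - y).
Proof. exact: (projT2 (choice attained) x y). Qed.

Lemma infconv_minE x :
  infconv (fun y => (p1 y)%:E) (fun y => (p2 y)%:E) x = (infconv_min x)%:E.
Proof.
apply/eqP; rewrite eq_le; apply/andP; split.
  by apply: ereal_inf_lbound; exists (infconv_argmin x).
by apply: le_ereal_inf_tmp => _ [y _ <-]; rewrite -EFinD lee_fin infconv_min_le.
Qed.

Lemma superlinear_infconv : superlinear p1 -> superlinear p2 -> superlinear infconv_min.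
Proof.
move=> s1 s2 M; have [c1 h1] := s1 (`|M|); have [c2 h2] := s2 (`|M|).
exists (c1 + c2) => x; rewrite /infconv_min; set u := infconv_argmin x.
have := h1 u; have := h2 (x - u); have := ler_norm M; have := enorm_ge0 x.
have : `|M| * enorm x <= `|M| * (enorm u + enorm (x - u)).
  by rewrite ler_wpM2l // -{1}(subrKC u x) enormD.
nra.
Qed.

Variables (P1 P2 : vec -> vec).
Hypotheses (hP1 : forall x, has_gradient p1 x (P1 x)) (hP2 : forall x, has_gradient p2 x (P2 x)).
Hypotheses (cp1 : convexR p1) (cp2 : convexR p2).

Lemma infconv_argmin_gradient x : P1 (infconv_argmin x) = P2 (x - infconv_argmin x).
Proof.
set u := infconv_argmin x.
have hg := has_gradientD (hP1 u) (has_gradient_subr (c := x) (hP2 (x - u))).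
apply/eqP; rewrite -subr_eq0; apply/eqP/esym/(subgradient_eq_gradient hg) => y.
by rewrite dotp0l addr0; exact: infconv_min_le.
Qed.

Lemma infconv_subgradient : subgradient_map infconv_min (fun x => P1 (infconv_argmin x)).
Proof.
move=> x w; rewrite /infconv_min; set u := infconv_argmin x; set u' := infconv_argmin w.
have h1 := convex_subgradient cp1 (hP1 u) u'.
have h2 := convex_subgradient cp2 (hP2 (x - u)) (w - u').
rewrite -infconv_argmin_gradient -/u in h2.
have -> : w - x = (u' - u) + (w - u' - (x - u)) by apply/rowP => i; rewrite !mxE; ring.
by rewrite dotpDr; lra.
Qed.

Lemma infconv_gradient x : has_gradient infconv_min x (P1 (infconv_argmin x)).
Proof.
move=> e e0; set u := infconv_argmin x.
have [d d0 hd] := @hP1 u e e0; exists d => // y hy.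
have up : infconv_min y <= p1 (u + (y - x)) + p2 (x - u).
  have := infconv_min_le y (u + (y - x)).
  by have -> : y - (u + (y - x)) = x - u by apply/rowP => i; rewrite !mxE; ring.
have uy : u + (y - x) - u = y - x by apply/rowP => i; rewrite !mxE; ring.
have := hd (u + (y - x)); rewrite uy ler_norml => /(_ hy) /andP[_ h3].
have h4 := infconv_subgradient x y.
rewrite ler_norml; apply/andP; split.
  have : 0 <= e * enorm (y - x) by rewrite mulr_ge0 ?enorm_ge0 // ltW.
  lra.
by move: up h3 h4; rewrite /infconv_min -/u; lra.
Qed.

End ExactInfconv.

Section InfconvSmooth.
Variables (R : realType) (n : nat).
Notation vec := 'rV[R]_n.
Implicit Types (x y z : vec).
Variables (p1 p2 q1 q2 : vec -> R) (P1 P2 Q1 Q2 : vec -> vec).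
Hypotheses (hP1 : forall x, has_gradient p1 x (P1 x)) (hP2 : forall x, has_gradient p2 x (P2 x)).
Hypotheses (hQ1 : forall x, has_gradient q1 x (Q1 x)) (hQ2 : forall x, has_gradient q2 x (Q2 x)).
Hypotheses (cp1 : convexR p1) (cp2 : convexR p2) (cq1 : convexR q1) (cq2 : convexR q2).
Hypothesis attp : forall x, exists u, forall y, p1 u + p2 (x - u) <= p1 y + p2 (x - y).
Hypothesis attq : forall x, exists u, forall y, q1 u + q2 (x - u) <= q1 y + q2 (x - y).

Let F := infconv_min attp.
Let Phi := infconv_min attq.

(* Add the relative upper bounds of the two components at their minimizers [u] and [z];
   the test point [y1] is chosen so that the [q]-terms recombine into a minimizer for [Phi]. *)
Lemma infconv_rel_upper : rel_upper q1 p1 -> rel_upper q2 p2 -> rel_upper Phi F.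
Proof.
move=> up1 up2 xb w s hF hPhi x.
set u := infconv_argmin attp xb; set z := infconv_argmin attq w.
have sP : s = P1 u := has_gradient_unique hF (infconv_gradient attp hP1 hP2 cp1 cp2 xb).
have sQ : s = Q1 z := has_gradient_unique hPhi (infconv_gradient attq hQ1 hQ2 cq1 cq2 w).
have hp1 : has_gradient p1 u s by rewrite sP; exact: hP1.
have hp2 : has_gradient p2 (xb - u) s.
  by rewrite sP (infconv_argmin_gradient attp hP1 hP2); exact: hP2.
have hq1 : has_gradient q1 z s by rewrite sQ; exact: hQ1.
have hq2 : has_gradient q2 (w - z) s.
  by rewrite sQ (infconv_argmin_gradient attq hQ1 hQ2); exact: hQ2.
set X := x - xb + w; set zX := infconv_argmin attq X; set y1 := zX - z + u.
have b1 := infconv_min_le attp x y1.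
have := up1 _ _ _ hp1 hq1 y1; have -> : y1 - u + z = zX.
  by apply/rowP => i; rewrite !mxE; ring.
have := up2 _ _ _ hp2 hq2 (x - y1); have -> : x - y1 - (xb - u) + (w - z) = X - zX.
  by apply/rowP => i; rewrite !mxE; ring.
by move: b1; rewrite /F /Phi /infconv_min -/u -/z -/zX; lra.
Qed.

Hypotheses (sq1 : superlinear q1) (sq2 : superlinear q2).

Lemma infconv_min_smooth_rel : rel_upper q1 p1 -> rel_upper q2 p2 ->
  smooth_rel Phi (fun x => (F x)%:E).
Proof.
move=> up1 up2; apply: (convex_rel_upper_smooth_rel (infconv_gradient attq hQ1 hQ2 cq1 cq2)).
- exact: infconv_subgradient.
- exact: superlinear_infconv.
- exact: infconv_gradient.
- exact: infconv_subgradient.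
- exact: infconv_rel_upper.
Qed.

End InfconvSmooth.

Section Instantiation.
Variables (R : realType) (n : nat).
Notation vec := 'rV[R]_n.
Implicit Types (x y z : vec) (p q g : vec -> R) (f : vec -> \bar R).

Definition reference_fun q := [/\ convexR q, differentiable_everywhere q & supercoerciveR q].

Definition convex_rel_smooth q p := [/\ convexR p, differentiable_everywhere p & rel_upper q p].

Lemma infconv_smooth_rel p1 p2 q1 q2 : reference_fun q1 -> reference_fun q2 ->
  convex_rel_smooth q1 p1 -> convex_rel_smooth q2 p2 ->
  (forall x, coerciveR (fun y => p1 y + p2 (x - y))) ->
  smooth_rel (fun x => fine (infconv (fun y => (q1 y)%:E) (fun y => (q2 y)%:E) x))
    (infconv (fun y => (p1 y)%:E) (fun y => (p2 y)%:E)).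
Proof.
move=> [cq1 dq1 sq1] [cq2 dq2 sq2] [cp1 dp1 up1] [cp2 dp2 up2] coer.
have [P1 hP1] := choice dp1; have [P2 hP2] := choice dp2.
have [Q1 hQ1] := choice dq1; have [Q2 hQ2] := choice dq2.
have attp := coerciveR_infconv_attained dp1 dp2 coer.
have attq := coerciveR_infconv_attained dq1 dq2
  (fun x => coerciveR_infconv x cq1 cq2 dq1 dq2 (or_intror (or_intror (or_introl sq1)))).
have -> : (fun x => fine (infconv (fun y => (q1 y)%:E) (fun y => (q2 y)%:E) x)) =
  infconv_min attq by apply: funext => x; rewrite infconv_minE.
have -> : infconv (fun y => (p1 y)%:E) (fun y => (p2 y)%:E) =
  (fun x => (infconv_min attp x)%:E) by apply: funext => x; rewrite infconv_minE.
exact: infconv_min_smooth_rel hP1 hP2 hQ1 hQ2 cp1 cp2 cq1 cq2 attp attq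
  (supercoercive_superlinear cq1 dq1 sq1) (supercoercive_superlinear cq2 dq2 sq2) up1 up2.
Qed.

Lemma convexR_fine f : (forall x, f x \is a fin_num) -> convex_fun f ->
  convexR (fun x => fine (f x)).
Proof.
move=> fin cf x y t /andP[t0 t1].
have [->|tn0] := eqVneq t 0; first by rewrite scale0r add0r subr0 scale1r mul0r add0r mul1r.
have [->|tn1] := eqVneq t 1; first by rewrite scale1r subrr scale0r addr0 mul1r mul0r addr0.
have := cf x y t; rewrite !lt_neqAle t0 t1 eq_sym tn0 tn1 => /(_ isT).
by rewrite -(fineK (fin x)) -(fineK (fin y)) -(fineK (fin (_ + _))) -!EFinM -EFinD lee_fin.
Qed.

Lemma rel_upper_escaleR a q p : 0 < a -> rel_upper q p -> rel_upper (escaleR a q) (escaleR a p).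
Proof.
move=> a0 up x z s /(has_gradient_of_escaleR a0) hx /(has_gradient_of_escaleR a0) hz y.
have := up _ _ _ hx hz (a^-1 *: y); rewrite /escaleR scalerDr scalerBr => h.
by have := ler_wpM2l (ltW a0) h; lra.
Qed.

Lemma escale_reference a phi : 0 < a -> standing_assumption phi -> reference_fun (escaleR a phi).
Proof.
move=> a0 [cphi dphi _ sphi]; split.
- exact: convexR_escaleR.
- exact: differentiable_escaleR.
- exact: supercoerciveR_escaleR.
Qed.

Lemma escale_convex_rel_smooth a phi f : 0 < a -> standing_assumption phi ->
  convex_fun f -> smooth_rel phi f ->
  convex_rel_smooth (escaleR a phi) (escaleR a (fun x => fine (f x))).
Proof.
move=> a0 hphi cf sf; have [fin [G [hG _]] _ _] := sf; split.
- exact/(convexR_escaleR a0)/convexR_fine.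
- by apply: differentiable_escaleR => // x; exists (G x).
- exact/(rel_upper_escaleR a0)/smooth_rel_rel_upper.
Qed.

Lemma escale_fine a f : (forall x, f x \is a fin_num) ->
  escale a f = (fun x => (escaleR a (fun y => fine (f y)) x)%:E).
Proof. by move=> fin; apply: funext => x; rewrite /escale /escaleR (EFinM a) fineK. Qed.

Lemma escale_EFin a g : escale a (fun x => (g x)%:E) = (fun x => (escaleR a g x)%:E).
Proof. by apply: funext => x; rewrite /escale /escaleR (EFinM a). Qed.

Lemma bounded_below_fine f : (forall x, f x \is a fin_num) -> bounded_below f ->
  bounded_belowR (fun x => fine (f x)).
Proof. by move=> fin [m hm]; exists m => x; rewrite -lee_fin fineK. Qed.

Lemma coercive_fine f : (forall x, f x \is a fin_num) -> coercive f ->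
  coerciveR (fun x => fine (f x)).
Proof. by move=> fin hc M; have [r hr] := hc M; exists r => x /hr; rewrite -lee_fin fineK. Qed.

Lemma supercoercive_fine f : (forall x, f x \is a fin_num) -> supercoercive f ->
  supercoerciveR (fun x => fine (f x)).
Proof. by move=> fin hc M; have [r hr] := hc M; exists r => x /hr; rewrite -lee_fin fineK. Qed.

Lemma escale_growth a1 a2 f1 f2 : 0 < a1 -> 0 < a2 ->
  (forall x, f1 x \is a fin_num) -> (forall x, f2 x \is a fin_num) ->
  (bounded_below f1 /\ coercive f2) \/ (bounded_below f2 /\ coercive f1) \/
    supercoercive f1 \/ supercoercive f2 ->
  let p1 := escaleR a1 (fun x => fine (f1 x)) in let p2 := escaleR a2 (fun x => fine (f2 x)) in
  (bounded_belowR p1 /\ coerciveR p2) \/ (bounded_belowR p2 /\ coerciveR p1) \/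
    supercoerciveR p1 \/ supercoerciveR p2.
Proof.
move=> a10 a20 fin1 fin2 [[b c]|[[b c]|[s|s]]] p1 p2.
- left; split; first exact/bounded_belowR_escaleR/bounded_below_fine.
  exact/coerciveR_escaleR/coercive_fine.
- right; left; split; first exact/bounded_belowR_escaleR/bounded_below_fine.
  exact/coerciveR_escaleR/coercive_fine.
- by right; right; left; apply/supercoerciveR_escaleR/supercoercive_fine.
- by right; right; right; apply/supercoerciveR_escaleR/supercoercive_fine.
Qed.

End Instantiation.

Theorem mainTheorem14 (R : realType) (n : nat)
  (phi1 phi2 : 'rV[R]_n -> R) (f1 f2 : 'rV[R]_n -> \bar R) (a1 a2 : R) :
  standing_assumption phi1 -> standing_assumption phi2 ->
  proper_fun f1 -> lsc f1 -> convex_fun f1 -> smooth_rel phi1 f1 ->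
  proper_fun f2 -> lsc f2 -> convex_fun f2 -> smooth_rel phi2 f2 ->
  0 < a1 -> 0 < a2 ->
  ((bounded_below f1 /\ coercive f2) \/ (bounded_below f2 /\ coercive f1) \/
   supercoercive f1 \/ supercoercive f2) ->
  smooth_rel (ref_infconv a1 a2 phi1 phi2) (infconv (escale a1 f1) (escale a2 f2)).
Proof.
(* Properness and lower semicontinuity of [f1], [f2] follow from their smoothness. *)
move=> hs1 hs2 _ _ cf1 sf1 _ _ cf2 sf2 a10 a20 growth.
have [fin1 _ _ _] := sf1; have [fin2 _ _ _] := sf2.
have hp1 := escale_convex_rel_smooth a10 hs1 cf1 sf1.
have hp2 := escale_convex_rel_smooth a20 hs2 cf2 sf2.
have [cp1 dp1 _] := hp1; have [cp2 dp2 _] := hp2.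
rewrite /ref_infconv !escale_EFin (escale_fine a1 fin1) (escale_fine a2 fin2).
apply: infconv_smooth_rel (escale_reference a10 hs1) (escale_reference a20 hs2) hp1 hp2 _ => x.
exact: coerciveR_infconv cp1 cp2 dp1 dp2 (escale_growth a10 a20 fin1 fin2 growth).
Qed.
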